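(* Let $\mathcal{F}\subseteq\Sigma^*$ be a finite family of strings, $k\ge0$ an integer, and $(N(F))_{F\in\mathcal{F}}$ a $k$-complete family. Then for all $F_1,F_2\in\mathcal{F}$ and all integers $0\le d\le k$, $$\mathsf{LCP}_d(F_1,F_2)=\max_{\substack{d_1+d_2=d\\ F_i'\in N_{d,d_i}(F_i)}}\mathsf{LCP}(F_1',F_2')=\max_{\substack{\lfloor d_1+d_2\rfloor\le d\\ F_i'\in N_{k,d_i}(F_i)}}\mathsf{LCP}(F_1',F_2'),$$ where in the first maximum $d_1,d_2$ range over half-integers in $[0,d]$ and in the second over half-integers in $[0,k]$.
   Context: Let $\$\notin\Sigma$ and $\Sigma_\$=\Sigma\cup\{\$\}$. $d_H$ is the Hamming distance of equal-length strings, $\mathsf{LCP}$ the longest common prefix length, $\mathsf{LCP}_d(U,V)=\max\{p\le\min(|U|,|V|): d_H(U[1..p],V[1..p])\le d\}$, and $\#_\$(W)$ the number of occurrences of $\$$ in $W$. For $U,V\in\Sigma^*$ and $d\ge0$, strings $U',V'\in\Sigma_\$^*$ form a $(U,V)_d$-pair if $|U'|=|U|$, $|V'|=|V|$, and for each position $i$: if $i>\mathsf{LCP}_d(U,V)$ or $U[i]=V[i]$ then $U'[i]=U[i]$ and $V'[i]=V[i]$; otherwise $U'[i]=V'[i]\in\{U[i],V[i],\$\}$. Sets $N(F)\subseteq\Sigma_\$^*$ ($F\in\mathcal{F}$) form a $k$-complete family if for all $U,V\in\mathcal{F}$ and $0\le d\le k$ there is a $(U,V)_d$-pair $(U',V')$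 with $U'\in N(U)$, $V'\in N(V)$. For $F\in\mathcal{F}$ and integer $d\ge 0$, $N_d(F)=\{F'\in N(F): |F'|=|F|,\ d_H(F,F')\le d\}$, and for a half-integer $0\le d'\le d$, $N_{d,d'}(F)=\{F'\in N_d(F): d_H(F,F')-\tfrac12\#_\$(F')\le d'\}$. A half-integer is an element of $\tfrac12\mathbb{Z}$. *)

(* Alphabet Sigma is an arbitrary eqType T; Sigma_$ is
   option T with None playing the role of the fresh symbol $. *)
From mathcomp Require Import all_boot.
Set Implicit Arguments. Unset Strict Implicit. Unset Printing Implicit Defensive.

Definition hamming (A : eqType) (u v : seq A) : nat :=
  count (fun p => p.1 != p.2) (zip u v).

Fixpoint lcp (A : eqType) (u v : seq A) : nat :=
  match u, v with
  | x :: u', y :: v' => if x == y then (lcp u' v').+1 else 0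
  | _, _ => 0
  end.

Definition lcp_d (A : eqType) (d : nat) (U V : seq A) : nat :=
  \max_(p < (minn (size U) (size V)).+1 | hamming (take p U) (take p V) <= d) p.

Definition ndollar (T : eqType) (W : seq (option T)) : nat := count_mem None W.

(* (U,V)_d-pair; positions are 0-based here, so the paper's position i+1 > LCP_d
   becomes LCP_d <= i. *)
Definition pair_d (T : eqType) (d : nat) (U V : seq T) (U' V' : seq (option T)) : Prop :=
  let L := lcp_d d U V in
  let Us := map Some U in let Vs := map Some V in
  [/\ size U' = size U, size V' = size V,
      (forall i, (L <= i \/ nth None Us i = nth None Vs i) ->
         (i < size U -> nth None U' i = nth None Us i) /\
         (i < size V -> nth None V' i = nth None Vs i)) &
      (forall i, i < L -> nth None Us i <> nth None Vs i ->
         nth None U' i = nth None V' i /\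
         nth None U' i \in [:: nth None Us i; nth None Vs i; None])].

Definition k_complete (T : eqType) (Fam : seq (seq T))
    (N : seq T -> seq (option T) -> Prop) (k : nat) : Prop :=
  forall U V, U \in Fam -> V \in Fam -> forall d, d <= k ->
    exists U' V', [/\ pair_d d U V U' V', N U U' & N V V'].

Definition N_d (T : eqType) (N : seq T -> seq (option T) -> Prop) (d : nat)
    (F : seq T) (F' : seq (option T)) : Prop :=
  [/\ N F F', size F' = size F & hamming (map Some F) F' <= d].

(* N_{d,d'}(F) with the half-integer d' = h/2 (h : nat, h <= 2d):
   d_H(F,F') - #$(F')/2 <= h/2  <=>  2 d_H(F,F') <= h + #$(F') *)
Definition N_dh (T : eqType) (N : seq T -> seq (option T) -> Prop) (d h : nat)
    (F : seq T) (F' : seq (option T)) : Prop :=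
  [/\ h <= d.*2, N_d N d F F' & (hamming (map Some F) F').*2 <= h + ndollar F'].

(* candidate values of the first maximum: d1 = h1/2, d2 = h2/2 in [0,d], d1+d2 = d *)
Definition cand1 (T : eqType) (N : seq T -> seq (option T) -> Prop) (d : nat)
    (F1 F2 : seq T) (n : nat) : Prop :=
  exists h1 h2 F1' F2',
    [/\ h1 <= d.*2, h2 <= d.*2, h1 + h2 = d.*2 &
        [/\ N_dh N d h1 F1 F1', N_dh N d h2 F2 F2' & lcp F1' F2' = n]].

(* candidate values of the second maximum: d1 = h1/2, d2 = h2/2 in [0,k],
   floor(d1+d2) <= d *)
Definition cand2 (T : eqType) (N : seq T -> seq (option T) -> Prop) (k d : nat)
    (F1 F2 : seq T) (n : nat) : Prop :=
  exists h1 h2 F1' F2',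
    [/\ h1 <= k.*2, h2 <= k.*2, (h1 + h2)./2 <= d &
        [/\ N_dh N k h1 F1 F1', N_dh N k h2 F2 F2' & lcp F1' F2' = n]].

Definition is_max (P : nat -> Prop) (m : nat) : Prop :=
  P m /\ forall n, P n -> n <= m.

(** The upper bound is a per-position triangle inequality: at a position of
    the common prefix of [F1'] and [F2'] where [F1] and [F2] differ, at least
    one of [F1'], [F2'] differs from its source, and both do unless the common
    symbol is [$]; so [2 d_H(F1, F1') + 2 d_H(F2, F2')] dominates twice the
    Hamming distance of the prefixes plus the number of [$]s, and the parity
    slack of [floor (d1 + d2) <= d] is absorbed after halving.
    The lower bound is attained by a [(F1, F2)_d]-pair given by [k]-completeness:
    its LCP is exactly [LCP_d(F1, F2)] (merging stops at the first mismatch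
    past [LCP_d]), and it meets the inequality above with equality, which
    fixes half-integers [d1 + d2 = d]. *)
From mathcomp Require Import all_boot zify.
Set Implicit Arguments. Unset Strict Implicit. Unset Printing Implicit Defensive.

Lemma hamming_cons (A : eqType) (x y : A) u v :
  hamming (x :: u) (y :: v) = (x != y) + hamming u v.
Proof. by []. Qed.

Lemma hamming_refl (A : eqType) (u : seq A) : hamming u u = 0.
Proof. by elim: u => //= x u IH; rewrite hamming_cons eqxx IH. Qed.

Lemma lcp_leq_size (A : eqType) (u v : seq A) : lcp u v <= minn (size u) (size v).
Proof.
elim: u v => [|x u IH] [|y v] //=; case: eqP => // _.
by have := IH v; lia.
Qed.

Section Strings.
Variable T : eqType.

Lemma ndollar_cons (a : option T) (U' : seq (option T)) :
  ndollar (a :: U') = (a == None) + ndollar U'.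
Proof. by []. Qed.

Lemma ndollar_le_hamming (U : seq T) (U' : seq (option T)) :
  size U' = size U -> ndollar U' <= hamming (map Some U) U'.
Proof.
elim: U U' => [|x U IH] [|a U'] // [HU].
rewrite ndollar_cons hamming_cons; have := IH _ HU; set h := hamming _ U'.
by case: a => [z|] /=; lia.
Qed.

Lemma hamming_takeS (U V : seq T) n : n < size U -> n < size V ->
  hamming (take n.+1 U) (take n.+1 V) =
  hamming (take n U) (take n V) + (nth None (map Some U) n != nth None (map Some V) n).
Proof.
elim: U V n => [|x U IH] [|y V] [|n] // HU HV.
  by rewrite /= !take0 hamming_cons (inj_eq Some_inj) /hamming /= addn0.
by rewrite /= !hamming_cons IH // addnA.
Qed.

Lemma mismatch_dollar_le (x y : T) (a : option T) :
  (x != y) + (a == None) <= (Some x != a) + (Some y != a).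
Proof.
case: a => [z|]; rewrite ?(inj_eq Some_inj) /=; last by case: (x != y).
by rewrite addn0; do 3 case: eqP => /= ?; subst => //; congruence.
Qed.

Lemma hamming_prefix_lcp_le (U V : seq T) (U' V' : seq (option T)) :
  size U' = size U -> size V' = size V ->
  (hamming (take (lcp U' V') U) (take (lcp U' V') V)).*2 + ndollar U' + ndollar V'
   <= (hamming (map Some U) U').*2 + (hamming (map Some V) V').*2.
Proof.
have lcp0 (U0 V0 : seq T) (U0' V0' : seq (option T)) :
    size U0' = size U0 -> size V0' = size V0 ->
    lcp U0' V0' = 0 ->
    (hamming (take (lcp U0' V0') U0) (take (lcp U0' V0') V0)).*2
      + ndollar U0' + ndollar V0'
    <= (hamming (map Some U0) U0').*2 + (hamming (map Some V0) V0').*2.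
  move=> HU HV ->; rewrite !take0.
  by have := ndollar_le_hamming HU; have := ndollar_le_hamming HV; rewrite /hamming /=; lia.
elim: U V U' V' => [|x U IH] [|y V] [|a U'] [|b V'] HU HV;
  try (by apply: lcp0); try discriminate.
have [Eab|Hab] := eqVneq a b; last by apply: lcp0 => //=; rewrite (negbTE Hab).
subst b; case: HU HV => HU [HV].
have -> : lcp (a :: U') (a :: V') = (lcp U' V').+1 by rewrite /= eqxx.
rewrite !take_cons !map_cons !hamming_cons !ndollar_cons.
by have := IH V U' V' HU HV; have := mismatch_dollar_le x y a; lia.
Qed.

Lemma leq_lcp_d d (U V : seq T) p : p <= minn (size U) (size V) ->
  hamming (take p U) (take p V) <= d -> p <= lcp_d d U V.
Proof.
move=> Hp Hh; have Hp' : p < (minn (size U) (size V)).+1 by [].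
exact: (@leq_bigmax_cond _ _ (fun i : 'I__ => nat_of_ord i) (Ordinal Hp')).
Qed.

Lemma lcp_d_spec d (U V : seq T) :
  lcp_d d U V <= minn (size U) (size V) /\
  hamming (take (lcp_d d U V) U) (take (lcp_d d U V) V) <= d.
Proof.
rewrite /lcp_d.
set A := [pred p : 'I_(minn (size U) (size V)).+1 | hamming (take p U) (take p V) <= d].
have A_gt0 : 0 < #|A| by apply/card_gt0P; exists ord0; rewrite inE /= !take0.
have [i Ai ->] := eq_bigmax_cond (fun i : 'I__ => nat_of_ord i) A_gt0.
by split; [rewrite -ltnS ltn_ord | move: Ai; rewrite inE].
Qed.

Lemma lcp_d_mismatch d (U V : seq T) : let L := lcp_d d U V in
  L < size U -> L < size V -> nth None (map Some U) L != nth None (map Some V) L.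
Proof.
move=> L HU HV; apply/negP => /eqP HL.
have [_ Hh] := lcp_d_spec d U V.
have : L.+1 <= L.
  apply: leq_lcp_d; first by rewrite leq_min HU HV.
  by rewrite hamming_takeS // HL eqxx addn0.
by rewrite ltnn.
Qed.

Lemma lcp_N_dh_le_lcp_d (N : seq T -> seq (option T) -> Prop) K d (U V : seq T)
    h1 h2 U' V' :
  N_dh N K h1 U U' -> N_dh N K h2 V V' -> h1 + h2 <= d.*2.+1 ->
  lcp U' V' <= lcp_d d U V.
Proof.
move=> [_ [_ HU _] HU'] [_ [_ HV _] HV'] Hh.
apply: leq_lcp_d; first by have := lcp_leq_size U' V'; rewrite HU HV.
by have := hamming_prefix_lcp_le HU HV; lia.
Qed.

(** [pair_d d U V] is [merged_at (lcp_d d U V) U V] up to unfolding; freeing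
    the merging length [L] makes the defining properties stable under
    [behead], which the induction below needs. *)
Definition merged_at (L : nat) (U V : seq T) (U' V' : seq (option T)) : Prop :=
  let Us := map Some U in let Vs := map Some V in
  [/\ size U' = size U, size V' = size V,
      (forall i, (L <= i \/ nth None Us i = nth None Vs i) ->
         (i < size U -> nth None U' i = nth None Us i) /\
         (i < size V -> nth None V' i = nth None Vs i)) &
      (forall i, i < L -> nth None Us i <> nth None Vs i ->
         nth None U' i = nth None V' i /\
         nth None U' i \in [:: nth None Us i; nth None Vs i; None])].

Lemma merged_at0 (U V : seq T) (U' V' : seq (option T)) :
  merged_at 0 U V U' V' -> U' = map Some U /\ V' = map Some V.
Proof.
case=> HU HV Hout _; split; apply: (eq_from_nth (x0 := None)); rewrite ?size_map //.
- by move=> i; rewrite HU => /(proj1 (Hout i (or_introl (leq0n i)))).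
- by move=> i; rewrite HV => /(proj2 (Hout i (or_introl (leq0n i)))).
Qed.

Lemma merged_atS L x y (U V : seq T) a b (U' V' : seq (option T)) :
  merged_at L.+1 (x :: U) (y :: V) (a :: U') (b :: V') ->
  [/\ merged_at L U V U' V',
      x = y -> a = Some x /\ b = Some y &
      x != y -> a = b /\ a \in [:: Some x; Some y; None]].
Proof.
case=> [[HU] [HV] Hout Hin]; split=> [|Exy|Hxy].
- by split=> // i; [move/(Hout i.+1) | move/(Hin i.+1)].
- by subst y; have [/(_ isT) ? /(_ isT) ?] := Hout 0 (or_intror erefl).
- by apply: (Hin 0) => // -[Exy]; rewrite Exy eqxx in Hxy.
Qed.

(** The merging at the first [L] positions is exactly optimal: each mismatch
    of the prefixes costs two halves, paid either by two plain mismatches or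
    by a single [$] on each side. *)
Lemma merged_at_cost L (U V : seq T) (U' V' : seq (option T)) :
  merged_at L U V U' V' -> L <= size U -> L <= size V ->
  (L < size U -> L < size V -> nth None (map Some U) L != nth None (map Some V) L) ->
  [/\ hamming (map Some U) U' <= hamming (take L U) (take L V),
      hamming (map Some V) V' <= hamming (take L U) (take L V),
      (hamming (map Some U) U').*2 + (hamming (map Some V) V').*2 <=
        (hamming (take L U) (take L V)).*2 + ndollar U' + ndollar V'
    & lcp U' V' = L].
Proof.
elim: L U V U' V' => [|L IH] U V U' V' HM HLU HLV Hstop.
  have [-> ->] := merged_at0 HM; rewrite !take0 !hamming_refl; split=> //.
  case: U V Hstop {HM HLU HLV} => [|x U] [|y V] //= Hstop.
  by rewrite (negbTE (Hstop isT isT)).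
case: HM (HM) => HU HV _ _.
case: U V U' V' HU HV HLU HLV Hstop => [|x U] [|y V] [|a U'] [|b V'] //=
  _ _ HLU HLV Hstop.
case/merged_atS => HM Heq Hneq.
have [I1 I2 I3 I4] := IH U V U' V' HM HLU HLV Hstop.
rewrite !hamming_cons.
have [Exy|Nxy] := eqVneq x y.
  have [-> ->] := Heq Exy; rewrite Exy /= !eqxx /= I4; split=> //; lia.
have [Eab a_in] := Hneq Nxy; subst b.
rewrite eqxx I4; split=> //.
- by move: I1; case: (Some x != a) => /=; lia.
- by move: I2; case: (Some y != a) => /=; lia.
- by move: a_in; rewrite !inE => /or3P [] /eqP ->; rewrite ?eqxx /=; lia.
Qed.

Lemma pair_d_cost d (U V : seq T) (U' V' : seq (option T)) :
  pair_d d U V U' V' ->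
  [/\ hamming (map Some U) U' <= d, hamming (map Some V) V' <= d,
      (hamming (map Some U) U').*2 + (hamming (map Some V) V').*2 <=
        d.*2 + ndollar U' + ndollar V'
    & lcp U' V' = lcp_d d U V].
Proof.
move=> HP; have [HL Hh] := lcp_d_spec d U V.
have [I1 I2 I3 ->] := merged_at_cost HP (leq_trans HL (geq_minl _ _))
  (leq_trans HL (geq_minr _ _)) (@lcp_d_mismatch d U V).
by split=> //; lia.
Qed.

(** [d1] is chosen as small as [U'] allows, [2 d1 = 2 d_H(U, U') - #$(U')];
    the cost bound of [pair_d_cost] then leaves room for [V'] at [d2 = d - d1]. *)
Lemma pair_d_N_dh (N : seq T -> seq (option T) -> Prop) d (U V : seq T)
    (U' V' : seq (option T)) :
  pair_d d U V U' V' -> N U U' -> N V V' ->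
  exists2 h, h <= d.*2 &
    forall K, d <= K -> N_dh N K h U U' /\ N_dh N K (d.*2 - h) V V'.
Proof.
move=> HP NU NV; have [HU HV _ _] := HP.
have [H1 H2 H3 _] := pair_d_cost HP.
have := ndollar_le_hamming HU; have := ndollar_le_hamming HV => nV nU.
exists ((hamming (map Some U) U').*2 - ndollar U'); first lia.
move=> K HdK; split.
- by split; [lia | split=> //; lia | lia].
- by split; [lia | split=> //; lia | lia].
Qed.

End Strings.

Theorem lemma9 (T : eqType) (Fam : seq (seq T)) (k : nat)
    (N : seq T -> seq (option T) -> Prop) :
  k_complete Fam N k ->
  forall F1 F2, F1 \in Fam -> F2 \in Fam ->
  forall d, d <= k ->
    is_max (cand1 N d F1 F2) (lcp_d d F1 F2) /\
    is_max (cand2 N k d F1 F2) (lcp_d d F1 F2).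
Proof.
move=> Hk F1 F2 HF1 HF2 d Hdk.
have [U' [V' [HP NU NV]]] := Hk F1 F2 HF1 HF2 d Hdk.
have [_ _ _ lcpE] := pair_d_cost HP.
have [h h_le N_h] := pair_d_N_dh HP NU NV.
have [NdU NdV] := N_h d (leqnn d).
have [NkU NkV] := N_h k Hdk.
split; split.
- exists h, (d.*2 - h), U', V'; split=> //; lia.
- move=> n [h1 [h2 [F1' [F2' [_ _ Hh [N1 N2 <-]]]]]].
  by apply: lcp_N_dh_le_lcp_d N1 N2 _; lia.
- exists h, (d.*2 - h), U', V'; split=> //; rewrite -?divn2; lia.
- move=> n [h1 [h2 [F1' [F2' [_ _ Hh [N1 N2 <-]]]]]].
  by apply: lcp_N_dh_le_lcp_d N1 N2 _; move: Hh; rewrite -divn2; lia.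
Qed.
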